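(* Let $\mathcal{X},\mathcal{Y}$ be finite, $P_X$ a distribution, $P_{Y|X}$ a channel with output $P_Y$, and let $M$ be a positive integer and $\mathscr{C}_M^n=\{X_1^n,\dots,X_M^n\}$ a codebook of $M$ independent codewords drawn from $P_{X^n}$. Fix $y^n\in\mathcal{T}^n_{Q_{\bar Y}}$ with $P_{Y^n}(y^n)>0$ and a conditional type $Q_{\bar X|\bar Y}\in\mathcal{P}_n(\mathcal{X}|Q_{\bar Y})$, let $Q_{\bar X\bar Y}=Q_{\bar X|\bar Y}Q_{\bar Y}$, $(\bar X,\bar Y)\sim Q_{\bar X\bar Y}$ and $x^n_{Q_{\bar X|\bar Y}}\in\mathcal{T}^n_{Q_{\bar X|\bar Y}}(y^n)$. Then \[ P_{Y^n}(y^n)\,\mathbb{E}\big[|Z_{Q_{\bar X\bar Y}}-\mathbb{E}[Z_{Q_{\bar X\bar Y}}]|\big]\le P_{Y^n|X^n}(y^n|x^n_{Q_{\bar X|\bar Y}})\,\mathfrak{Y}(M,Q_{\bar X\bar Y})=\exp\big(-n\,\mathbb{E}[\imath_{P_{Y|X}}(\bar Y|\bar X)]\big)\,\mathfrak{Y}(M,Q_{\bar X\bar Y}). \]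
   Context: $P_{X^n},P_{Y^n}$ are i.i.d. extensions of $P_X,P_Y$; $P_{Y^n|X^n}(y^n|x^n)=\prod_iP_{Y|X}(y_i|x_i)$. For an $n$-type $Q_{\bar Y}$, $\mathcal{T}^n_{Q_{\bar Y}}$ is its type class. A conditional type of $x^n$ given $y^n$ is $Q_{\bar X|\bar Y}$ with $Q_{\bar X|\bar Y}(a|b)Q_{\bar Y}(b)$ equal to the joint empirical distribution of $(x^n,y^n)$; $\mathcal{P}_n(\mathcal{X}|Q_{\bar Y})$ is the set of such conditional types and $\mathcal{T}^n_{Q_{\bar X|\bar Y}}(y^n)$ the set of $x^n$ with that conditional type given $y^n$. Define $N_{Q_{\bar X|\bar Y}}(y^n)=\sum_{j=1}^M1\{X_j^n\in\mathcal{T}^n_{Q_{\bar X|\bar Y}}(y^n)\}$, $p_{Q_{\bar X|\bar Y}}(y^n)=\mathbb{P}[X^n\in\mathcal{T}^n_{Q_{\bar X|\bar Y}}(y^n)]$ for $X^n\sim P_{X^n}$, $l_{Q_{\bar X|\bar Y}}(y^n)=P_{Y^n|X^n}(y^n|x^n_{Q_{\bar X|\bar Y}})/P_{Y^n}(y^n)$, $Z_{Q_{\bar X\bar Y}}=\frac1MN_{Q_{\bar X|\bar Y}}(y^n)\,l_{Q_{\bar X|\bar Y}}(y^n)$, and $\mathfrak{Y}(M,Q_{\bar X\bar Y})=\min\{2p_{Q_{\bar X|\bar Y}}(y^n),\,M^{-1/2}p_{Q_{\bar X|\bar Y}}^{1/2}(y^n)\}$. $\imath_{P_{Y|X}}(y|x)=\log\frac1{P_{Y|X}(y|x)}$;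 logs and exps use a common base. *)

From HB Require Import structures.
From mathcomp Require Import all_boot all_order all_algebra.
From mathcomp Require Import reals ereal exp.
Set Implicit Arguments. Unset Strict Implicit. Unset Printing Implicit Defensive.
Import Order.TTheory GRing.Theory Num.Theory.
Local Open Scope ring_scope.

Section Defs.
Variables (R : realType) (X Y : finType).

Definition is_distr (P : X -> R) := (forall a, 0 <= P a) /\ \sum_a P a = 1.
Definition is_channel (W : X -> Y -> R) :=
  (forall a b, 0 <= W a b) /\ (forall a, \sum_b W a b = 1).
Definition outY (PX : X -> R) (W : X -> Y -> R) (b : Y) : R :=
  \sum_a PX a * W a b.

Variable n : nat.
Definition iidX (PX : X -> R) (x : {ffun 'I_n -> X}) : R := \prod_i PX (x i).
Definition iidY (PY : Y -> R) (y : {ffun 'I_n -> Y}) : R := \prod_i PY (y i).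
Definition chan_n (W : X -> Y -> R) (y : {ffun 'I_n -> Y}) (x : {ffun 'I_n -> X})
  : R := \prod_i W (x i) (y i).

Definition typeY (y : {ffun 'I_n -> Y}) (b : Y) : R :=
  #|[set i | y i == b]|%:R / n%:R.
Definition jtype (x : {ffun 'I_n -> X}) (y : {ffun 'I_n -> Y}) (a : X) (b : Y)
  : R := #|[set i | (x i == a) && (y i == b)]|%:R / n%:R.

Definition ctype_class (Q : X -> Y -> R) (y : {ffun 'I_n -> Y})
  : {set {ffun 'I_n -> X}} :=
  [set x | [forall a, [forall b, Q a b * typeY y b == jtype x y a b]]].
(* Q is a conditional type given y^n, i.e. Q \in P_n(X | Q_{Y}) with Q_Y the type of y *)
Definition is_ctype (Q : X -> Y -> R) (y : {ffun 'I_n -> Y}) :=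
  exists x : {ffun 'I_n -> X}, forall a b, Q a b * typeY y b = jtype x y a b.

Variable M : nat.
(* random codebook of M independent codewords drawn from P_{X^n} *)
Definition codebook := {ffun 'I_M -> {ffun 'I_n -> X}}.
Definition Ecb (PX : X -> R) (f : codebook -> R) : R :=
  \sum_(c : codebook) (\prod_j iidX PX (c j)) * f c.

Definition NQ (Q : X -> Y -> R) (y : {ffun 'I_n -> Y}) (c : codebook) : nat :=
  #|[set j | c j \in ctype_class Q y]|.
Definition pQ (PX : X -> R) (Q : X -> Y -> R) (y : {ffun 'I_n -> Y}) : R :=
  \sum_(x in ctype_class Q y) iidX PX x.
Definition lQ PX W (y : {ffun 'I_n -> Y}) (xQ : {ffun 'I_n -> X}) : R :=
  chan_n W y xQ / iidY (outY PX W) y.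
Definition ZQ PX W Q y xQ (c : codebook) : R :=
  (NQ Q y c)%:R / M%:R * lQ PX W y xQ.
Definition frakY PX Q y : R :=
  Num.min (2 * pQ PX Q y) (Num.sqrt (pQ PX Q y / M%:R)).

Definition idens (W : X -> Y -> R) (a : X) (b : Y) : \bar R :=
  if 0 < W a b then (- ln (W a b))%:E else +oo%E.
(* E[imath(Ybar|Xbar)] with (Xbar,Ybar) ~ Q_{XY} = Q_{X|Y} Q_Y *)
Definition E_idens W (Q : X -> Y -> R) (y : {ffun 'I_n -> Y}) : \bar R :=
  (\sum_a \sum_b ((Q a b * typeY y b)%:E * idens W a b))%E.
End Defs.
Arguments ZQ {R X Y n} M PX W Q y xQ c.

(* N_Q counts the codewords falling in the conditional type class, so it is a
   sum of M independent Bernoulli(p) indicators with p = p_Q(y^n), and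
   Z = l N_Q / M.  Since P_{Y^n}(y^n) l = P_{Y^n|X^n}(y^n|x_Q), it suffices to
   bound the mean absolute deviation of N_Q / M: it is at most 2p by the
   triangle inequality, and at most the standard deviation
   sqrt(p(1-p)/M) <= sqrt(p/M) (Cauchy-Schwarz, here via 2t|u| <= u^2 + t^2).
   For the exponential form, W^n(y^n|x_Q) = exp(- sum_i imath(y_i|x_i)), and
   grouping positions by the joint type of (x_Q, y^n) turns the sum into
   n E[imath(Ybar|Xbar)]; a vanishing factor W(y_i|x_i) = 0 matches
   imath = +oo, as exp(-oo) = 0. *)

From mathcomp Require Import all_boot all_order all_algebra.
From mathcomp Require Import reals ereal exp.
From mathcomp Require Import ring lra.

Set Implicit Arguments. Unset Strict Implicit. Unset Printing Implicit Defensive.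
Import Order.TTheory GRing.Theory Num.Theory.
Local Open Scope ring_scope.

Section Codebook.
Variables (R : realType) (X : finType) (n M : nat) (PX : X -> R).
Hypothesis PX_ge0 : forall a, 0 <= PX a.
Hypothesis PX_sum1 : \sum_a PX a = 1.

Local Notation E := (@Ecb R X n M PX).

Lemma iidX_ge0 (x : {ffun 'I_n -> X}) : 0 <= iidX PX x.
Proof. exact: prodr_ge0. Qed.

Lemma sum_iidX : \sum_(x : {ffun 'I_n -> X}) iidX PX x = 1.
Proof.
by rewrite /iidX -(bigA_distr_bigA (fun _ a => PX a)) big1.
Qed.

Lemma eq_Ecb f g : f =1 g -> E f = E g.
Proof. by move=> fg; apply: eq_bigr => c _; rewrite fg. Qed.

Lemma EcbD f g : E (fun c => f c + g c) = E f + E g.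
Proof. by rewrite /Ecb -big_split; apply: eq_bigr => c _; rewrite mulrDr. Qed.

Lemma EcbZ a f : E (fun c => a * f c) = a * E f.
Proof. by rewrite /Ecb mulr_sumr; apply: eq_bigr => c _; rewrite mulrCA. Qed.

Lemma Ecb_sum (I : finType) (F : I -> codebook X n M -> R) :
  E (fun c => \sum_i F i c) = \sum_i E (F i).
Proof. by rewrite /Ecb exchange_big; apply: eq_bigr => c _; rewrite mulr_sumr. Qed.

Lemma ler_Ecb f g : (forall c, f c <= g c) -> E f <= E g.
Proof.
move=> fg; apply: ler_sum => c _; apply: ler_wpM2l => //.
by apply: prodr_ge0 => j _; apply: iidX_ge0.
Qed.

Lemma Ecb_prod (h : 'I_M -> {ffun 'I_n -> X} -> R) :
  E (fun c => \prod_l h l (c l)) = \prod_l \sum_x iidX PX x * h l x.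
Proof.
rewrite /Ecb (bigA_distr_bigA (fun l x => iidX PX x * h l x)).
by apply: eq_bigr => c _; rewrite big_split.
Qed.

Lemma Ecb_cst a : E (fun _ => a) = a.
Proof.
have E1 : E (fun c => \prod_l (fun _ _ => 1) l (c l)) = 1.
  rewrite (Ecb_prod (fun _ _ => 1)) big1 // => l _.
  by under eq_bigr do rewrite mulr1; apply: sum_iidX.
by rewrite -[RHS]mulr1 -E1 -EcbZ; apply: eq_Ecb => c; rewrite big1 ?mulr1.
Qed.

Lemma Ecb_norm_le f t :
  0 < t -> E (fun c => f c ^+ 2) <= t ^+ 2 -> E (fun c => `|f c|) <= t.
Proof.
move=> t_gt0 Ef2.
have AMGM : E (fun c => t *+ 2 * `|f c|) <= E (fun c => f c ^+ 2 + t ^+ 2).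
  apply: ler_Ecb => c; rewrite -(real_normK (num_real (f c))) mulrC mulrnAr.
  exact: leif_mean_square_scaled.
rewrite EcbZ EcbD Ecb_cst in AMGM; nra.
Qed.

Variable A : {set {ffun 'I_n -> X}}.
Local Notation p := (\sum_(x in A) iidX PX x).

Definition hits (c : codebook X n M) : nat := #|[set j | c j \in A]|.

Lemma hitsE c : (hits c)%:R = \sum_j (c j \in A)%:R :> R.
Proof.
rewrite /hits -sum1_card natr_sum [LHS]big_mkcond /=.
by apply: eq_bigr => j _; rewrite inE; case: (_ \in _).
Qed.

Lemma Ecb_prod_in (S : {set 'I_M}) :
  E (fun c => \prod_(l in S) (c l \in A)%:R) = p ^+ #|S|.
Proof.
pose h l x : R := if l \in S then (x \in A)%:R else 1.
rewrite (@eq_Ecb _ (fun c => \prod_l h l (c l))); last first.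
  by move=> c; rewrite big_mkcond.
rewrite Ecb_prod -prodr_const [RHS]big_mkcond; apply: eq_bigr => l _; rewrite /h.
case: ifP => _; last by under eq_bigr do rewrite mulr1; apply: sum_iidX.
by rewrite [RHS]big_mkcond; apply: eq_bigr => x _; case: (x \in A); rewrite ?mulr1 ?mulr0.
Qed.

Lemma Ecb_in2 j k :
  E (fun c => (c j \in A)%:R * (c k \in A)%:R) = if j == k then p else p ^+ 2.
Proof.
rewrite (@eq_Ecb _ (fun c => \prod_(l in [set j; k]) (c l \in A)%:R)).
  by rewrite Ecb_prod_in cards2; case: eqP.
move=> c; case: (eqVneq j k) => [<-|jk]; last by rewrite big_setU1 ?inE // big_set1.
by rewrite setUid big_set1; case: (_ \in _); rewrite ?mulr1 ?mulr0.
Qed.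

Lemma Ecb_in j : E (fun c => (c j \in A)%:R) = p.
Proof.
have := Ecb_in2 j j; rewrite eqxx => <-; apply: eq_Ecb => c.
by case: (_ \in _); rewrite ?mulr1 ?mulr0.
Qed.

Lemma Ecb_hits : E (fun c => (hits c)%:R) = M%:R * p.
Proof.
rewrite (eq_Ecb hitsE) Ecb_sum (eq_bigr _ (fun j _ => Ecb_in j)).
by rewrite sumr_const card_ord mulr_natl.
Qed.

Lemma Ecb_hits_sqr :
  E (fun c => (hits c)%:R ^+ 2) = M%:R * p + M%:R * (M%:R - 1) * p ^+ 2.
Proof.
rewrite (@eq_Ecb _ (fun c => \sum_j \sum_k (c j \in A)%:R * (c k \in A)%:R)); last first.
  move=> c; rewrite hitsE expr2 mulr_suml.
  by apply: eq_bigr => j _; rewrite mulr_sumr.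
rewrite Ecb_sum; under eq_bigr do rewrite Ecb_sum (eq_bigr _ (fun k _ => Ecb_in2 _ k)).
have row (j : 'I_M) (r s : R) : \sum_k (if j == k then r else s) = r + (M%:R - 1) * s.
  rewrite (bigD1 j) //= eqxx (eq_bigr (fun _ => s)); last first.
    by move=> k; rewrite eq_sym => /negbTE ->.
  rewrite sumr_const cardC1 card_ord -subn1 -[in LHS]mulr_natl natrB //.
  exact: leq_ltn_trans (leq0n j) (ltn_ord j).
by rewrite (eq_bigr _ (fun j _ => row j _ _)) sumr_const card_ord -mulr_natl; ring.
Qed.

Hypothesis M_gt0 : (0 < M)%N.

Lemma Ecb_freq : E (fun c => (hits c)%:R / M%:R) = p.
Proof.
rewrite (eq_Ecb (fun c => mulrC _ _)) EcbZ Ecb_hits mulKf //.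
by rewrite pnatr_eq0 -lt0n.
Qed.

Lemma Ecb_freq_dev_sqr :
  E (fun c => ((hits c)%:R / M%:R - p) ^+ 2) = p * (1 - p) / M%:R.
Proof.
have M_neq0 : M%:R != 0 :> R by rewrite pnatr_eq0 -lt0n.
rewrite (@eq_Ecb _ (fun c => M%:R ^- 2 * (hits c)%:R ^+ 2
                             + (- (2 * p / M%:R) * (hits c)%:R + p ^+ 2))).
  by rewrite EcbD EcbZ EcbD EcbZ Ecb_cst Ecb_hits_sqr Ecb_hits; field.
by move=> c; field.
Qed.

Lemma Ecb_freq_dev :
  E (fun c => `|(hits c)%:R / M%:R - p|) <= Num.min (2 * p) (Num.sqrt (p / M%:R)).
Proof.
have M_pos : 0 < M%:R :> R by rewrite ltr0n.
have p_ge0 : 0 <= p by apply: sumr_ge0 => x _; apply: iidX_ge0.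
have dev_le_2p : E (fun c => `|(hits c)%:R / M%:R - p|) <= 2 * p.
  apply: le_trans (@ler_Ecb _ (fun c => (hits c)%:R / M%:R + p) _) _.
    move=> c; apply: le_trans (ler_normB _ _) _.
    by rewrite !ger0_norm ?divr_ge0 // ltW.
  by rewrite EcbD Ecb_freq Ecb_cst; lra.
rewrite le_min dev_le_2p /=.
have [p_le0|p_gt0] := lerP p 0.
  by apply: le_trans dev_le_2p _; have := sqrtr_ge0 (p / M%:R); lra.
apply: Ecb_norm_le; first by rewrite sqrtr_gt0 divr_gt0.
rewrite sqr_sqrtr ?divr_ge0 ?(ltW M_pos) // Ecb_freq_dev_sqr.
by rewrite ler_wpM2r ?invr_ge0 ?(ltW M_pos) //; nra.
Qed.

End Codebook.

Section JointType.
Variables (R : realType) (X Y : finType) (n : nat).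
Implicit Types (x : {ffun 'I_n -> X}) (y : {ffun 'I_n -> Y}).

Lemma natr_mul_jtype x y a b :
  n%:R * jtype R x y a b = #|[set i | (x i == a) && (y i == b)]|%:R.
Proof.
(* For n = 0 both sides vanish: jtype divides by 0 and 'I_0 is empty. *)
rewrite /jtype mulrCA; case: (posnP n) => [n0|n_gt0]; last first.
  by rewrite mulfV ?mulr1 // pnatr_eq0 -lt0n.
suff -> : #|[set i | (x i == a) && (y i == b)]| = 0%N by rewrite !mul0r.
by apply/eqP; rewrite -leqn0 -[X in (_ <= X)%N]n0 -[X in (_ <= X)%N]card_ord max_card.
Qed.

Lemma sume_jtype (g : X -> Y -> \bar R) x y : (forall a b, 0 <= g a b)%E ->
  ((n%:R)%:E * \sum_a \sum_b (jtype R x y a b)%:E * g a b = \sum_i g (x i) (y i))%E.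
Proof.
move=> g_ge0.
have jtype_ge0 a b : 0 <= jtype R x y a b by rewrite /jtype divr_ge0.
rewrite pair_big /= ge0_sume_distrr => [|[a b] _]; last by rewrite mule_ge0 ?lee_fin.
rewrite (partition_big (fun i => (x i, y i)) xpredT) //=.
apply: eq_bigr => -[a b] _ /=.
rewrite muleA -EFinM natr_mul_jtype mule_natl.
rewrite (eq_bigr (fun _ => g a b)); last first.
  by move=> i /andP[/eqP /= -> /eqP /= ->].
by rewrite sumr_const; congr (_ *+ _); apply: eq_card => i; rewrite inE.
Qed.

End JointType.

Lemma ctype_class_jtype (R : realType) (X Y : finType) n (Q : X -> Y -> R)
    (y : {ffun 'I_n -> Y}) (x : {ffun 'I_n -> X}) :
  x \in ctype_class Q y -> forall a b, Q a b * typeY R y b = jtype R x y a b.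
Proof. by rewrite inE => /forallP jt a b; move/forallP/(_ b)/eqP: (jt a). Qed.

Section InformationDensity.
Variables (R : realType) (X Y : finType) (W : X -> Y -> R).

Lemma channel_le1 a b : is_channel W -> W a b <= 1.
Proof.
by move=> [W_ge0 W_sum1]; rewrite -(W_sum1 a) (bigD1 b) //= lerDl sumr_ge0.
Qed.

Lemma idens_ge0 a b : W a b <= 1 -> (0 <= idens W a b)%E.
Proof. by rewrite /idens; case: ifP => // W_gt0 W_le1; rewrite lee_fin oppr_ge0 ln_le0. Qed.

Lemma expeR_Nidens a b : 0 <= W a b -> expeR (- idens W a b) = (W a b)%:E.
Proof.
rewrite /idens; case: ifP => [W_gt0 _|]; first by rewrite /= opprK lnK.
move=> /negbT; rewrite -leNgt => W_le0 W_ge0.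
by have -> : W a b = 0 by apply/le_anti/andP.
Qed.

Lemma chan_n_expeR n (y : {ffun 'I_n -> Y}) (Q : X -> Y -> R) (x : {ffun 'I_n -> X}) :
  is_channel W -> x \in ctype_class Q y ->
  (chan_n W y x)%:E = expeR (- (n%:R)%:E * E_idens W Q y)%E.
Proof.
move=> W_chan /ctype_class_jtype jt; rewrite /E_idens.
under eq_bigr do under eq_bigr do rewrite jt.
have idens_ge0' a b := idens_ge0 (channel_le1 a b W_chan).
rewrite mulNe sume_jtype // -sumeN; last first.
  by move=> i j _ _; apply: ge0_adde_def; rewrite inE idens_ge0'.
rewrite (big_morph _ expeRD expeR0) /chan_n -prodEFin; apply: eq_bigr => i _.
by rewrite expeR_Nidens //; case: W_chan.
Qed.

End InformationDensity.

Theorem lemma3 (R : realType) (X Y : finType) (PX : X -> R) (W : X -> Y -> R)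
  (n M : nat) (y : {ffun 'I_n -> Y}) (Q : X -> Y -> R) (xQ : {ffun 'I_n -> X}) :
  is_distr PX -> is_channel W -> (0 < M)%N ->
  0 < iidY (outY PX W) y ->
  is_ctype Q y -> xQ \in ctype_class Q y ->
  let Z := ZQ M PX W Q y xQ in
  let EZ := Ecb PX Z in
  iidY (outY PX W) y * Ecb PX (fun c => `|Z c - EZ|)
    <= chan_n W y xQ * frakY M PX Q y
  /\ ((chan_n W y xQ * frakY M PX Q y)%:E
      = expeR (- (n%:R)%:E * E_idens W Q y) * (frakY M PX Q y)%:E)%E.
Proof.
move=> [PX_ge0 PX_sum1] W_chan M_gt0 PY_gt0 _ xQ_in Z EZ.
split; last by rewrite EFinM (chan_n_expeR W_chan xQ_in).
set A := ctype_class Q y; set L := lQ PX W y xQ.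
have chan_ge0 : 0 <= chan_n W y xQ by apply: prodr_ge0 => i _; case: W_chan.
have L_ge0 : 0 <= L by rewrite divr_ge0 // ltW.
have Z_freq c : Z c = L * ((hits A c)%:R / M%:R) by rewrite /Z /ZQ mulrC.
have EZ_p : EZ = L * pQ PX Q y.
  by rewrite /EZ (eq_Ecb PX Z_freq) EcbZ (Ecb_freq PX_sum1 _ M_gt0).
have Z_dev c : `|Z c - EZ| = L * `|(hits A c)%:R / M%:R - pQ PX Q y|.
  by rewrite Z_freq EZ_p -mulrBr normrM ger0_norm.
rewrite (eq_Ecb PX Z_dev) EcbZ mulrA.
have -> : iidY (outY PX W) y * L = chan_n W y xQ.
  by rewrite mulrCA mulfV ?mulr1 // gt_eqF.
by apply: ler_wpM2l => //; exact: (Ecb_freq_dev PX_ge0 PX_sum1 _ M_gt0).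
Qed.
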